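(* Let $\lambda,\mu,\rho$ be partitions of $n$ with $I,J,K$ parts respectively, and let $P$ be the swap Markov chain on $\mathcal{T}_{\lambda,\mu,\rho}$ defined in the context. Then $P$ is connected (irreducible) on $\mathcal{T}_{\lambda,\mu,\rho}$ and reversible with respect to \[ \pi_{\lambda,\mu,\rho}(T)=\frac1{n!}\prod_{i,j,k}\frac{\lambda_i!\,\mu_j!\,\rho_k!}{T_{ijk}!}. \]
   Context: $\mathcal{T}_{\lambda,\mu,\rho}$ is the set of arrays $T=(T_{ijk})_{1\le i\le I,1\le j\le J,1\le k\le K}$ of nonnegative integers with $\sum_{j,k}T_{ijk}=\lambda_i$, $\sum_{i,k}T_{ijk}=\mu_j$, $\sum_{i,j}T_{ijk}=\rho_k$ for all $i,j,k$. Represent $T$ as a multiset of $n$ triples $(i,j,k)$, with $T_{ijk}$ copies of $(i,j,k)$. One step of the chain: choose two of the $n$ triples independently and uniformly at random (possibly the same one), choose $r\in\{1,2,3\}$ uniformly, and swap the $r$-th coordinates of the two chosen triples; e.g. for $r=1$, $(i_1,j_1,k_1),(i_2,j_2,k_2)\mapsto(i_2,j_1,k_1),(i_1,j_2,k_2)$. Thus the move that removes one copy each of $(i_1,j_1,k_1)$ and $(i_2,j_2,k_2)$ and adds the swapped triples is made with probability $\frac13\cdot\frac{2T_{i_1j_1k_1}T_{i_2j_2k_2}}{n^2}$. Reversibility means $\pi(T)P(T,T')=\pi(T')P(T',T)$ for all $T,T'$. *)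

From HB Require Import structures.
From mathcomp Require Import all_boot all_order all_algebra.
Set Implicit Arguments. Unset Strict Implicit. Unset Printing Implicit Defensive.
Import Order.TTheory GRing.Theory Num.Theory.
Local Open Scope ring_scope.

Definition is_int_partition (n : nat) (l : seq nat) : bool :=
  [&& sorted geq l, all (fun x => (0 < x)%N) l & sumn l == n].

Definition triple (I J K : nat) := ('I_I * 'I_J * 'I_K)%type.

Definition array3 (I J K : nat) := {ffun triple I J K -> nat}.

Definition in_Tspace (I J K : nat) (lam mu rho : seq nat) (T : array3 I J K) : bool :=
  [&& [forall i : 'I_I, \sum_(j < J) \sum_(k < K) T (i, j, k) == nth 0 lam i],
      [forall j : 'I_J, \sum_(i < I) \sum_(k < K) T (i, j, k) == nth 0 mu j] &
      [forall k : 'I_K, \sum_(i < I) \sum_(j < J) T (i, j, k) == nth 0 rho k]].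

(* swap the r-th coordinate (r = 0,1,2 for coordinates 1,2,3) of two triples *)
Definition swap_coord (I J K : nat) (r : 'I_3) (x y : triple I J K)
  : triple I J K * triple I J K :=
  let: (i1, j1, k1) := x in
  let: (i2, j2, k2) := y in
  match val r with
  | 0 => ((i2, j1, k1), (i1, j2, k2))
  | 1 => ((i1, j2, k1), (i2, j1, k2))
  | _ => ((i1, j1, k2), (i2, j2, k1))
  end.

(* the multiset after removing one copy of x and of y and adding the swapped
   triples (computed in int to be exact also when x = y) *)
Definition swap_result (I J K : nat) (T : array3 I J K) (r : 'I_3)
  (x y : triple I J K) (z : triple I J K) : int :=
  let s := swap_coord r x y in
  (T z)%:Z + (z == s.1)%:Z + (z == s.2)%:Z - (z == x)%:Z - (z == y)%:Z.

(* One-step transition probability P(T,T') of the swap chain: two of the n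
   triples are chosen independently and uniformly (ordered, possibly the same
   one): there are T_x * T_y ordered choices of positions giving types (x,y);
   r in {1,2,3} is uniform. *)
Definition swapP (n I J K : nat) (T T' : array3 I J K) : rat :=
  (3 * (n%:R) ^+ 2)^-1 *
  \sum_(x : triple I J K) \sum_(y : triple I J K) \sum_(r < 3)
     if [forall z, (T' z)%:Z == swap_result T r x y z]
     then ((T x * T y)%N)%:R else 0.

Definition piT (n I J K : nat) (lam mu rho : seq nat) (T : array3 I J K) : rat :=
  ((\prod_(i < I) (nth 0 lam i)`!) * (\prod_(j < J) (nth 0 mu j)`!)
     * (\prod_(k < K) (nth 0 rho k)`!))%:R /
  ((n`! * \prod_(x : triple I J K) (T x)`!)%N)%:R.

From HB Require Import structures.
From mathcomp Require Import all_boot all_order all_algebra.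
From mathcomp Require Import zify ring.
Import Order.TTheory GRing.Theory Num.Theory.
Local Open Scope ring_scope.

(* Reversibility: if T' arises from T by swapping coordinates of copies of x
   and y, producing x' and y', then T - e_x - e_y = T' - e_x' - e_y' =: W, and
   T_x T_y / prod_z T_z! = 1 / prod_z W_z! = T'_x' T'_y' / prod_z T'_z!.  So
   the forward and backward terms of detailed balance agree after reindexing
   the moves by the swap involution.
   Irreducibility: list T and T' as sequences of n triples; equal margins mean
   the three coordinate sequences are permutations of each other.  Swaps of
   one coordinate at a time turn the head of the first sequence into the head
   of the second without changing the margins, and induction on the length
   does the rest. *)

Set Implicit Arguments. Unset Strict Implicit. Unset Printing Implicit Defensive.

Section SwapMoves.
Variables I J K : nat.
Implicit Types (x y z : triple I J K) (r : 'I_3) (T : array3 I J K).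

Definition swap_pair r (p : triple I J K * triple I J K) := swap_coord r p.1 p.2.

Lemma swap_pairK r : involutive (swap_pair r).
Proof. by case=> [[[i1 j1] k1] [[i2 j2] k2]]; case: r => [[|[|r]] ?]. Qed.

Lemma swap_coord_diag r x : swap_coord r x x = (x, x).
Proof. by case: x => [[i j] k]; case: r => [[|[|r]] ?]. Qed.

Definition swap_move T T' r x y : bool :=
  [forall z, (T' z)%:Z == swap_result T r x y z].

Definition remove_pair T x y z : int := (T z)%:Z - (z == x)%:Z - (z == y)%:Z.

Lemma swap_move_sym T T' r x y :
  swap_move T T' r x y = swap_move T' T r (swap_pair r (x, y)).1 (swap_pair r (x, y)).2.
Proof.
rewrite /swap_move /swap_result /=.
have := swap_pairK r (x, y); rewrite /swap_pair /= => ->.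
by apply: eq_forallb => z; apply/eqP/eqP => ->; ring.
Qed.

Lemma swap_move_diag T T' r x : swap_move T T' r x x -> T' = T.
Proof.
rewrite /swap_move /swap_result swap_coord_diag => /forallP moved.
apply/ffunP => z; apply/eqP; rewrite -eqz_nat (eqP (moved z)) /=.
by apply/eqP; ring.
Qed.

Lemma swap_move_remove_pair T T' r x y : swap_move T T' r x y ->
  remove_pair T' (swap_pair r (x, y)).1 (swap_pair r (x, y)).2 =1 remove_pair T x y.
Proof.
by move=> /forallP moved z; rewrite /remove_pair (eqP (moved z)) /swap_result; ring.
Qed.

(* [0] when [W] has a negative entry, which is when [T_x T_y = 0] below. *)
Definition inv_fact_prod (W : triple I J K -> int) : rat :=
  if [forall z, 0 <= W z] then ((\prod_z (absz (W z))`!)%N%:R)^-1 else 0.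

Lemma eq_inv_fact_prod W1 W2 : W1 =1 W2 -> inv_fact_prod W1 = inv_fact_prod W2.
Proof.
move=> eqW; rewrite /inv_fact_prod (eq_forallb (fun z => congr1 _ (eqW z))).
by under eq_bigr => z _ do rewrite eqW.
Qed.

Section RemovePair.
Variables (T : array3 I J K) (x y : triple I J K).
Hypotheses (neq_xy : x != y) (Tx_gt0 : (0 < T x)%N) (Ty_gt0 : (0 < T y)%N).

Lemma remove_pairE z : remove_pair T x y z = (T z - (z == x) - (z == y))%N.
Proof.
rewrite /remove_pair; have [->|_] := eqVneq z x.
  by have [exy|_] := eqVneq x y; [move: neq_xy; rewrite exy eqxx | lia].
by have [->|_] := eqVneq z y; lia.
Qed.

Lemma prod_fact_remove_pair :
  (\prod_z (T z)`! = T x * T y * \prod_z (absz (remove_pair T x y z))`!)%N.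
Proof.
under [in RHS]eq_bigr => z _ do rewrite remove_pairE /=.
rewrite (bigD1 x) // (bigD1 y) 1?eq_sym //= [in RHS](bigD1 x) //=.
rewrite [in RHS](bigD1 y) 1?eq_sym //= !eqxx [y == x]eq_sym (negbTE neq_xy).
rewrite [in RHS](eq_bigr (fun z => (T z)`!)); last first.
  by move=> z /andP[/negbTE-> /negbTE->]; rewrite !subn0.
case: (T x) Tx_gt0 => // a _; case: (T y) Ty_gt0 => // b _.
by rewrite !factS /= !subn0 !subn1 /=; ring.
Qed.
End RemovePair.

Lemma entries_div_prod_fact T x y : x != y ->
  (T x * T y)%N%:R / (\prod_z (T z)`!)%N%:R = inv_fact_prod (remove_pair T x y).
Proof.
move=> neq_xy; rewrite /inv_fact_prod.
have [Tx0|Tx_gt0] := posnP (T x).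
  rewrite Tx0 mul0n mul0r; case: ifP => // /forallP /(_ x).
  by rewrite /remove_pair Tx0 eqxx (negbTE neq_xy).
have [Ty0|Ty_gt0] := posnP (T y).
  rewrite Ty0 muln0 mul0r; case: ifP => // /forallP /(_ y).
  by rewrite /remove_pair Ty0 eqxx eq_sym (negbTE neq_xy).
have -> : [forall z, 0 <= remove_pair T x y z].
  by apply/forallP => z; rewrite remove_pairE.
rewrite (prod_fact_remove_pair neq_xy Tx_gt0 Ty_gt0) (natrM _ (T x * T y)) invfM.
rewrite mulrA mulfV ?mul1r //.
by rewrite pnatr_eq0 -lt0n muln_gt0 Tx_gt0 Ty_gt0.
Qed.

Section Reversibility.
Variables (n : nat) (lam mu rho : seq nat).
Local Notation pi := (piT n lam mu rho).

Lemma piT_mul_eq T T' (a b : rat) :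
  a / (\prod_z (T z)`!)%N%:R = b / (\prod_z (T' z)`!)%N%:R -> pi T * a = pi T' * b.
Proof.
move=> eq_ab; rewrite /piT !(natrM _ n`!) !invfM -!mulrA.
by rewrite [_^-1 * a]mulrC [_^-1 * b]mulrC eq_ab.
Qed.

Lemma swap_term_reversible T T' r x y
    (x' := (swap_pair r (x, y)).1) (y' := (swap_pair r (x, y)).2) :
  pi T * (if swap_move T T' r x y then (T x * T y)%N%:R else 0) =
  pi T' * (if swap_move T' T r x' y' then (T' x' * T' y')%N%:R else 0).
Proof.
rewrite -swap_move_sym; case: ifP => moved; last by rewrite !mulr0.
have [eq_xy|neq_xy] := eqVneq x y.
  move: moved; rewrite /x' /y' -eq_xy /swap_pair /= swap_coord_diag /=.
  by move=> /swap_move_diag ->.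
have neq_xy' : x' != y'.
  apply: contraNneq neq_xy => eq_xy'.
  have := swap_pairK r (x, y).
  by rewrite /swap_pair -/x' -/y' eq_xy' swap_coord_diag => -[<- <-].
apply: piT_mul_eq; rewrite !entries_div_prod_fact //.
by apply: eq_inv_fact_prod => z; rewrite (swap_move_remove_pair moved).
Qed.

Lemma piT_swapP_reversible T T' : pi T * swapP n T T' = pi T' * swapP n T' T.
Proof.
rewrite /swapP mulrCA [RHS]mulrCA; congr (_ * _).
rewrite !pair_big /= !mulr_sumr.
pose swap_all (p : triple I J K * triple I J K * 'I_3) := (swap_pair p.2 p.1, p.2).
have swap_allK : involutive swap_all by case=> [xy r]; rewrite /swap_all /= swap_pairK.
rewrite [RHS](reindex_inj (inv_inj swap_allK)).
by apply: eq_bigr => -[[x y] r] _; apply: swap_term_reversible.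
Qed.

End Reversibility.

End SwapMoves.

Section Connectivity.
Variables I J K : nat.
Implicit Types (x y u v : triple I J K) (r : 'I_3) (s t w : seq (triple I J K)).
Implicit Types (A B T : array3 I J K).

Definition swap_edge A B : bool :=
  [exists x, exists y, exists r, [&& 0 < A x, 0 < A y & swap_move A B r x y]%N].

Lemma swapP_gt0 n A B : (0 < n)%N -> swap_edge A B -> 0 < swapP n A B.
Proof.
move=> n_gt0 /existsP[x /existsP[y /existsP[r /and3P[Ax_gt0 Ay_gt0 moved]]]].
rewrite /swapP mulr_gt0 ?invr_gt0 ?mulr_gt0 ?exprn_gt0 ?ltr0n // !pair_big /=.
rewrite (bigD1 (x, y, r)) //= -/(swap_move A B r x y) moved.
rewrite ltr_wpDr ?ltr0n ?muln_gt0 ?Ax_gt0 //.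
by apply: sumr_ge0 => -[[? ?] ?] _; case: ifP.
Qed.

Definition swap_reachable A B := exists p, path swap_edge A p /\ last A p = B.

Lemma swap_reachable_refl A : swap_reachable A A.
Proof. by exists [::]. Qed.

Lemma swap_edge_reachable A B : swap_edge A B -> swap_reachable A B.
Proof. by exists [:: B]; rewrite /= andbT. Qed.

Lemma swap_reachable_trans B A C :
  swap_reachable A B -> swap_reachable B C -> swap_reachable A C.
Proof.
move=> [p [pathAB lastAB]] [q [pathBC lastBC]]; exists (p ++ q).
by rewrite cat_path last_cat lastAB pathAB pathBC.
Qed.

Definition array_of_seq s : array3 I J K := [ffun z => count_mem z s].

Lemma array_of_seq_perm s t : perm_eq s t -> array_of_seq s = array_of_seq t.
Proof. by move=> /permP eq_st; apply/ffunP => z; rewrite !ffunE eq_st. Qed.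

Lemma swap_edge_array_of_seq r w u v s :
  swap_edge (array_of_seq (w ++ u :: v :: s))
            (array_of_seq (w ++ (swap_coord r u v).1 :: (swap_coord r u v).2 :: s)).
Proof.
apply/existsP; exists u; apply/existsP; exists v; apply/existsP; exists r.
rewrite !ffunE !count_cat /= !eqxx /=; apply/and3P; split; try lia.
apply/forallP => z; rewrite /swap_result /= !ffunE !count_cat /= ![_ == z]eq_sym.
by apply/eqP; rewrite !PoszD; ring.
Qed.

Definition coord r x : nat :=
  match val r with 0 => val x.1.1 | 1 => val x.1.2 | _ => val x.2 end.

Lemma coord_swap1 r u v : coord r (swap_coord r u v).1 = coord r v.
Proof. by case: u v => [[? ?] ?] [[? ?] ?]; case: r => [[|[|[|?]]] ?]. Qed.

Lemma coord_swap2 r u v : coord r (swap_coord r u v).2 = coord r u.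
Proof. by case: u v => [[? ?] ?] [[? ?] ?]; case: r => [[|[|[|?]]] ?]. Qed.

Lemma coord_swap_other r r' u v : r' != r ->
  coord r' (swap_coord r u v).1 = coord r' u /\ coord r' (swap_coord r u v).2 = coord r' v.
Proof.
by case: u v => [[? ?] ?] [[? ?] ?]; case: r r' => [[|[|[|?]]] ?] [[|[|[|?]]] ?].
Qed.

Lemma triple_coord_inj x y : (forall r, coord r x = coord r y) -> x = y.
Proof.
case: x y => [[i j] k] [[i' j'] k'] eq_coord.
have /val_inj-> : val i = val i' := eq_coord (@Ordinal 3 0 isT).
have /val_inj-> : val j = val j' := eq_coord (@Ordinal 3 1 isT).
by have /val_inj-> : val k = val k' := eq_coord (@Ordinal 3 2 isT).
Qed.

Definition same_margins s t := forall r, perm_eq (map (coord r) s) (map (coord r) t).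

Lemma swap_reachable_set_coord r w u s m : m \in map (coord r) (u :: s) ->
  exists u' s',
    [/\ swap_reachable (array_of_seq (w ++ u :: s)) (array_of_seq (w ++ u' :: s')),
    coord r u' = m, forall r', r' != r -> coord r' u' = coord r' u
    & same_margins (u :: s) (u' :: s')].
Proof.
have [<- _|neq_m] := eqVneq (coord r u) m.
  by exists u, s; split=> //; apply: swap_reachable_refl.
rewrite /= inE eq_sym (negbTE neq_m) => /mapP[v v_in_s ->].
have perm_v : perm_eq (u :: s) (u :: v :: rem v s) by rewrite perm_cons perm_to_rem.
exists (swap_coord r u v).1, ((swap_coord r u v).2 :: rem v s); split.
- rewrite (@array_of_seq_perm (w ++ u :: s) (w ++ u :: v :: rem v s)) ?perm_cat2l //.
  exact/swap_edge_reachable/swap_edge_array_of_seq.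
- exact: coord_swap1.
- by move=> r' /(coord_swap_other u v)[].
move=> r'; apply: perm_trans (perm_map (coord r') perm_v) _ => /=.
have [->|/(coord_swap_other u v)[-> ->]//] := eqVneq r' r.
by rewrite coord_swap1 coord_swap2; apply/permP => P /=; rewrite addnCA.
Qed.

Lemma swap_reachable_set_coords (rs : seq 'I_3) w x : forall u s,
  (forall r, coord r x \in map (coord r) (u :: s)) ->
  exists u' s',
    [/\ swap_reachable (array_of_seq (w ++ u :: s)) (array_of_seq (w ++ u' :: s')),
    {in rs, forall r, coord r u' = coord r x},
    {in [predC rs], forall r, coord r u' = coord r u}
    & same_margins (u :: s) (u' :: s')].
Proof.
elim: rs => [|r rs IHrs] u s x_in.
  by exists u, s; split=> //; apply: swap_reachable_refl.
have [u1 [s1 [reach1 coord_u1 other_u1 marg1]]] := swap_reachable_set_coord w (x_in r).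
have [|u2 [s2 [reach2 in_rs not_in_rs marg2]]] := IHrs u1 s1.
  by move=> r'; rewrite -(perm_mem (marg1 r')).
exists u2, s2; split.
- exact: swap_reachable_trans reach1 reach2.
- move=> r'; rewrite inE; case: (boolP (r' \in rs)) => [/in_rs//|r'_notin].
  by rewrite orbF => /eqP eq_r; subst r'; rewrite not_in_rs.
- move=> r'; rewrite !inE negb_or => /andP[neq_r' r'_notin].
  by rewrite not_in_rs // other_u1.
by move=> r'; apply: perm_trans (marg1 r') (marg2 r').
Qed.

Lemma swap_reachable_same_margins t : forall s w, same_margins s t ->
  swap_reachable (array_of_seq (w ++ s)) (array_of_seq (w ++ t)).
Proof.
elim: t => [|x t IHt] [|u s] w marg;
  have := perm_size (marg ord0); rewrite ?size_map //.
  by move=> _; apply: swap_reachable_refl.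
move=> _; have x_in r : coord r x \in map (coord r) (u :: s).
  by rewrite (perm_mem (marg r)) mem_head.
have [u' [s' [reach1 coord_u' _ marg1]]] := swap_reachable_set_coords (enum 'I_3) w x_in.
have eq_u'x : u' = x by apply: triple_coord_inj => r; rewrite coord_u' ?mem_enum.
subst u'.
apply: swap_reachable_trans reach1 _; rewrite -!cat_rcons; apply: IHt => r.
by rewrite -(perm_cons (coord r x)); apply: perm_trans (marg r); rewrite perm_sym.
Qed.

Definition seq_of_array T : seq (triple I J K) :=
  flatten [seq nseq (T z) z | z <- index_enum (triple I J K)].

Lemma count_seq_of_array T (P : pred (triple I J K)) :
  count P (seq_of_array T) = (\sum_z P z * T z)%N.
Proof.
rewrite count_flatten sumnE !big_map; apply: eq_bigr => z _.
by rewrite count_nseq.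
Qed.

Lemma seq_of_arrayK : cancel seq_of_array array_of_seq.
Proof.
move=> T; apply/ffunP => z; rewrite ffunE count_seq_of_array (bigD1 z) //= eqxx.
by rewrite big1 ?addn0 ?mul1n // => z' /negbTE->.
Qed.

Lemma sum_triple (F : triple I J K -> nat) :
  (\sum_z F z = \sum_(i < I) \sum_(j < J) \sum_(k < K) F (i, j, k))%N.
Proof. by rewrite pair_big pair_big; apply: eq_bigr => -[[i j] k]. Qed.

Lemma in_Tspace_same_margins lam mu rho T T' :
  in_Tspace lam mu rho T -> in_Tspace lam mu rho T' ->
  same_margins (seq_of_array T) (seq_of_array T').
Proof.
move=> /and3P[/forallP rowT /forallP colT /forallP tubeT].
move=> /and3P[/forallP rowT' /forallP colT' /forallP tubeT'] r.
apply/permP => P; rewrite !count_map !count_seq_of_array !sum_triple.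
rewrite /coord; case: r => [[|[|[|?]]] ?] //=.
- apply: eq_bigr => i _.
  under eq_bigr => j _ do rewrite -big_distrr.
  under [RHS]eq_bigr => j _ do rewrite -big_distrr.
  by rewrite -!big_distrr /= (eqP (rowT i)) (eqP (rowT' i)).
- rewrite exchange_big [RHS]exchange_big; apply: eq_bigr => j _.
  under eq_bigr => i _ do rewrite -big_distrr.
  under [RHS]eq_bigr => i _ do rewrite -big_distrr.
  by rewrite -!big_distrr /= (eqP (colT j)) (eqP (colT' j)).
- under eq_bigr => i _ do rewrite exchange_big.
  under [RHS]eq_bigr => i _ do rewrite exchange_big.
  rewrite exchange_big [RHS]exchange_big; apply: eq_bigr => k _.
  under eq_bigr => i _ do rewrite -big_distrr.
  under [RHS]eq_bigr => i _ do rewrite -big_distrr.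
  by rewrite -!big_distrr /= (eqP (tubeT k)) (eqP (tubeT' k)).
Qed.

Lemma swap_reachable_Tspace lam mu rho T T' :
  in_Tspace lam mu rho T -> in_Tspace lam mu rho T' -> swap_reachable T T'.
Proof.
move=> inT inT'; rewrite -(seq_of_arrayK T) -(seq_of_arrayK T').
exact: (swap_reachable_same_margins [::] (in_Tspace_same_margins inT inT')).
Qed.

End Connectivity.

Lemma int_partition0 l : is_int_partition 0 l -> l = [::].
Proof. by case: l => // a l /and3P[_ /andP[a_gt0 _] /=]; lia. Qed.

Lemma array3_I0 J K (T T' : array3 0 J K) : T = T'.
Proof. by apply/ffunP => -[[[]]]. Qed.

Theorem theorem5p1 (n I J K : nat) (lam mu rho : seq nat) :
  is_int_partition n lam -> size lam = I ->
  is_int_partition n mu -> size mu = J ->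
  is_int_partition n rho -> size rho = K ->
  (* irreducibility: any two states are joined by a path of positive-probability steps *)
  (forall T T' : array3 I J K,
     in_Tspace lam mu rho T -> in_Tspace lam mu rho T' ->
     exists s : seq (array3 I J K),
       path (fun A B => 0 < swapP n A B) T s /\ last T s = T') /\
  (* reversibility with respect to pi *)
  (forall T T' : array3 I J K,
     in_Tspace lam mu rho T -> in_Tspace lam mu rho T' ->
     piT n lam mu rho T * swapP n T T' = piT n lam mu rho T' * swapP n T' T).
Proof.
move=> lam_part size_lam _ _ _ _.
split=> [T T' inT inT'|T T' _ _]; last exact: piT_swapP_reversible.
(* For n = 0 every step has probability (3 n^2)^-1 * _ = 0, but then the
   state space is a single point. *)
have [n0|n_gt0] := posnP n.
  move: lam_part size_lam; rewrite n0 => /int_partition0-> /= I0; subst I.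
  by exists [::]; split=> //; apply: array3_I0.
have [p [swap_path last_p]] := swap_reachable_Tspace inT inT'.
by exists p; split=> //; apply: sub_path swap_path => A B; apply: swapP_gt0.
Qed.
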